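(* Modularity is rich: for every finite set $V$ with $|V|\ge 2$ and every partition $C^*$ of $V$, there exist edge weights $E$ such that, for the graph $G=(V,E)$, the modularity $Q_{\mathrm{mod}}(G,C)$ is defined for every clustering $C$ of $G$ and $C^*$ is the unique clustering of $G$ maximizing $Q_{\mathrm{mod}}(G,\cdot)$.
   Context: A (symmetric weighted) graph is a pair $G=(V,E)$ of a finite set $V$ of nodes and a function $E:V\times V\to\mathbb{R}_{\ge 0}$ with $E(i,j)=E(j,i)$; self loops ($E(i,i)>0$) are allowed. A clustering of $G$ is a partition of $V$ into nonempty, pairwise disjoint sets (clusters). For $c\subseteq V$ define the volume $v_c=\sum_{i\in c}\sum_{j\in V}E(i,j)$ and the within-cluster weight $w_c=\sum_{i\in c}\sum_{j\in c}E(i,j)$; $v_V$ is the volume of the whole graph. Modularity is $Q_{\mathrm{mod}}(G,C)=\sum_{c\in C}\left(\frac{w_c}{v_V}-\left(\frac{v_c}{v_V}\right)^2\right)$, defined when $v_V>0$. *)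

From HB Require Import structures.
From mathcomp Require Import all_boot all_order all_algebra.
From mathcomp Require Import reals.
Set Implicit Arguments. Unset Strict Implicit. Unset Printing Implicit Defensive.
Import Order.TTheory GRing.Theory Num.Theory.
Local Open Scope ring_scope.

Definition is_weighted_graph (R : realType) (V : finType) (E : V -> V -> R) : Prop :=
  (forall i j, 0 <= E i j) /\ (forall i j, E i j = E j i).

(* A clustering is a partition of V into nonempty pairwise disjoint sets
   (mathcomp's [partition P [set: V]] includes set0 \notin P). *)
Definition clustering (V : finType) (C : {set {set V}}) : bool :=
  partition C [set: V].

Definition volume (R : realType) (V : finType) (E : V -> V -> R) (c : {set V}) : R :=
  \sum_(i in c) \sum_(j : V) E i j.

Definition within (R : realType) (V : finType) (E : V -> V -> R) (c : {set V}) : R :=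
  \sum_(i in c) \sum_(j in c) E i j.

Definition modularity (R : realType) (V : finType) (E : V -> V -> R)
    (C : {set {set V}}) : R :=
  \sum_(c in C) (within E c / volume E [set: V]
                 - (volume E c / volume E [set: V]) ^+ 2).

Definition modularity_defined (R : realType) (V : finType) (E : V -> V -> R) : Prop :=
  volume E [set: V] > 0.

From HB Require Import structures.
From mathcomp Require Import all_boot all_order all_algebra.
From mathcomp Require Import reals.
From mathcomp Require Import lra.
Import Order.TTheory GRing.Theory Num.Theory.
Local Open Scope ring_scope.

(* Writing d_i for the degree of i and m for the volume of the graph,
   modularity is the sum of the pair gains (E i j - d_i d_j / m) / m over
   the ordered pairs (i, j) lying in a common cluster.  Let E join any two
   distinct nodes of the same block of C* with weight 1, and put a self loop
   of weight 1/2 on every node.  Then every pair inside a block of C* has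
   positive gain, because d_i^2 < |block| d_i <= m, and every pair across
   two blocks has weight 0, hence negative gain.  The diagonal pairs are
   shared by all clusterings, so moving from C* to any other clustering
   loses a positive gain or collects a negative one. *)

Set Implicit Arguments. Unset Strict Implicit.

Section Partitions.
Variables (T : finType) (P : {set {set T}}).
Hypothesis partP : partition P [set: T].

Lemma trivIset_partitionT : trivIset P.
Proof. by case/and3P: partP. Qed.

Lemma pblock_self x : x \in pblock P x.
Proof. by rewrite mem_pblock (cover_partition partP) inE. Qed.

Lemma card_pblock_gt0 x : (0 < #|pblock P x|)%N.
Proof. by apply/card_gt0P; exists x; apply: pblock_self. Qed.

Lemma pblock_sym x y : (y \in pblock P x) = (x \in pblock P y).
Proof.
have coverP : cover P = [set: T] := cover_partition partP.
by rewrite -!eq_pblock ?coverP ?inE 1?eq_sym // trivIset_partitionT.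
Qed.

End Partitions.

Lemma partition_eq_pblock (T : finType) (D : {set T}) (P Q : {set {set T}}) :
  partition P D -> partition Q D ->
  {in D &, forall x y, (y \in pblock P x) = (y \in pblock Q x)} -> P = Q.
Proof.
move=> partP partQ samePQ.
rewrite -(equivalence_partition_pblock partP).
rewrite -(equivalence_partition_pblock partQ).
apply: eq_in_imset => x xD; apply/setP => y; rewrite !inE.
by case yD: (y \in D) => //=; rewrite samePQ.
Qed.

Lemma psumr_gt0 (R : numDomainType) (I : finType) (F : I -> R) i :
  (forall j, 0 <= F j) -> 0 < F i -> 0 < \sum_j F j.
Proof.
move=> F_ge0 Fi_gt0; rewrite (bigD1 i) //=.
by apply: (lt_le_trans Fi_gt0); rewrite lerDl sumr_ge0.
Qed.

Section Modularity.
Variables (R : realType) (V : finType) (E : V -> V -> R).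

Definition degree i := \sum_j E i j.

Definition pair_gain i j :=
  (E i j - degree i * degree j / volume E [set: V]) / volume E [set: V].

Lemma volume_degree (c : {set V}) : volume E c = \sum_(i in c) degree i.
Proof. by []. Qed.

Lemma sum_pair_gain (c : {set V}) :
  \sum_(i in c) \sum_(j in c) pair_gain i j =
  within E c / volume E [set: V] - (volume E c / volume E [set: V]) ^+ 2.
Proof.
rewrite /pair_gain /within (volume_degree c); move: (volume E _) => m.
rewrite expr2 mulf_div !mulr_suml -sumrB; apply: eq_bigr => i _.
rewrite mulr_sumr !mulr_suml -sumrB; apply: eq_bigr => j _.
by rewrite mulrBl invfM mulrA.
Qed.

Lemma modularityE (C : {set {set V}}) : clustering C ->
  modularity E C = \sum_i \sum_(j in pblock C i) pair_gain i j.
Proof.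
move=> partC; have trivC := trivIset_partitionT partC.
transitivity (\sum_(c in C) \sum_(i in c) \sum_(j in pblock C i) pair_gain i j).
  apply: eq_bigr => c cC; rewrite -sum_pair_gain.
  by apply: eq_bigr => i ic; rewrite (def_pblock trivC cC ic).
by rewrite -(set_partition_big _ partC); apply: eq_bigl => i; rewrite inE.
Qed.

Lemma modularity_lt_of_pair_gain (Cs C : {set {set V}}) :
  clustering Cs -> clustering C -> C != Cs ->
  (forall i j, i != j -> j \in pblock Cs i -> 0 < pair_gain i j) ->
  (forall i j, j \notin pblock Cs i -> pair_gain i j < 0) ->
  modularity E C < modularity E Cs.
Proof.
move=> partCs partC neqC gain_in gain_out.
pose gap i j := (if j \in pblock Cs i then pair_gain i j else 0)
              - (if j \in pblock C i then pair_gain i j else 0).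
have gap_ge0 i j : 0 <= gap i j.
  rewrite /gap; have [<-|neq_ij] := eqVneq i j.
    by rewrite !pblock_self // subrr.
  case: (boolP (j \in pblock Cs i)) => [inCs|outCs]; case: (j \in pblock C i);
    rewrite ?subrr ?subr0 ?sub0r ?oppr_ge0 //.
    exact/ltW/gain_in.
  exact/ltW/gain_out.
have gap_gt0 i j : (j \in pblock Cs i) != (j \in pblock C i) -> 0 < gap i j.
  have [<-|neq_ij] := eqVneq i j; first by rewrite !pblock_self.
  rewrite /gap; case: (boolP (j \in pblock Cs i)) => [inCs|outCs];
    case: (j \in pblock C i) => //= _; rewrite ?subr0 ?sub0r ?oppr_gt0.
    exact: gain_in.
  exact: gain_out.
have /existsP [i /existsP [j differ]] :
    [exists i, exists j, (j \in pblock Cs i) != (j \in pblock C i)].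
  rewrite -negb_forall; apply: contra neqC => /forallP same.
  apply/eqP/esym/(partition_eq_pblock partCs partC) => x y _ _.
  by apply/eqP; move/forallP: (same x).
have gapE k : \sum_(l in pblock Cs k) pair_gain k l
               - \sum_(l in pblock C k) pair_gain k l = \sum_l gap k l.
  by rewrite sumrB -!big_mkcond.
rewrite !modularityE // -subr_gt0 -sumrB; under eq_bigr do rewrite gapE.
apply: (psumr_gt0 (i := i)) => [k|]; first by apply: sumr_ge0.
exact: psumr_gt0 (gap_ge0 i) (gap_gt0 i j differ).
Qed.

End Modularity.

Section BlockGraph.
Variables (R : realType) (V : finType) (Cs : {set {set V}}).
Hypothesis partCs : clustering Cs.

(* With self loops of weight 1 instead of 1/2, a clustering Cs with a single
   block would give the intra-block pairs gain exactly 0. *)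
Definition block_graph (i j : V) : R :=
  (j \in pblock Cs i)%:R - (i == j)%:R / 2.

Local Notation E := block_graph.
Local Notation m := (volume block_graph [set: V]).

Lemma block_graph_weighted : is_weighted_graph E.
Proof.
split=> i j; rewrite /E; last by rewrite pblock_sym // eq_sym.
have [<-|neq_ij] := eqVneq i j; first by rewrite pblock_self //=; lra.
by rewrite mul0r subr0 ler0n.
Qed.

Lemma degree_block_graph i : degree E i = #|pblock Cs i|%:R - 2^-1.
Proof.
rewrite /degree /E sumrB; congr (_ - _).
  rewrite -sum1_card natr_sum [RHS]big_mkcond.
  by apply: eq_bigr => j _; case: (j \in _).
rewrite (bigD1 i) //= eqxx mul1r big1 ?addr0 // => j.
by rewrite eq_sym => /negPf ->; rewrite mul0r.
Qed.

Lemma degree_block_graph_gt0 i : 0 < degree E i.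
Proof.
have := card_pblock_gt0 partCs i; rewrite -(ler1n R) degree_block_graph; lra.
Qed.

Lemma degree_block_graph_pblock i j :
  j \in pblock Cs i -> degree E j = degree E i.
Proof.
move=> ij; rewrite !degree_block_graph (same_pblock _ ij) //.
exact: trivIset_partitionT.
Qed.

Lemma block_degree_le_volume i : #|pblock Cs i|%:R * degree E i <= m.
Proof.
rewrite volume_degree (bigID (mem (pblock Cs i))) /=.
apply: ler_wpDr.
  by apply: sumr_ge0 => l _; apply/ltW/degree_block_graph_gt0.
rewrite (eq_bigl (mem (pblock Cs i))) => [|l]; last by rewrite inE.
rewrite (eq_bigr (fun=> degree E i)) => [|l /degree_block_graph_pblock //].
by rewrite sumr_const mulr_natl.
Qed.

Lemma volume_block_graph_gt0 (x : V) : 0 < m.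
Proof.
apply: lt_le_trans (block_degree_le_volume x).
by rewrite mulr_gt0 ?degree_block_graph_gt0 // ltr0n card_pblock_gt0.
Qed.

Lemma pair_gain_block_graph_gt0 i j :
  i != j -> j \in pblock Cs i -> 0 < pair_gain E i j.
Proof.
move=> neq_ij ij; have m_gt0 := volume_block_graph_gt0 i; rewrite /pair_gain.
have -> : E i j = 1 by rewrite /E ij (negPf neq_ij) mul0r subr0.
rewrite (degree_block_graph_pblock ij) divr_gt0 // subr_gt0 ltr_pdivrMr // mul1r.
have degree_lt_card : degree E i < #|pblock Cs i|%:R.
  by rewrite degree_block_graph; lra.
apply: lt_le_trans (block_degree_le_volume i).
by rewrite ltr_pM2r ?degree_block_graph_gt0.
Qed.

Lemma pair_gain_block_graph_lt0 i j : j \notin pblock Cs i -> pair_gain E i j < 0.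
Proof.
move=> ij; have m_gt0 := volume_block_graph_gt0 i; rewrite /pair_gain.
have neq_ij : i != j by apply: contraNneq ij => <-; apply: pblock_self.
have -> : E i j = 0 by rewrite /E (negPf ij) (negPf neq_ij) mul0r subr0.
by rewrite sub0r mulNr oppr_lt0 !divr_gt0 // mulr_gt0 ?degree_block_graph_gt0.
Qed.

End BlockGraph.

Theorem theorem1 (R : realType) (V : finType) (Cstar : {set {set V}}) :
  (2 <= #|V|)%N -> clustering Cstar ->
  exists E : V -> V -> R,
    is_weighted_graph E /\
    modularity_defined E /\
    (forall C, clustering C -> C != Cstar ->
       modularity E C < modularity E Cstar).
Proof.
move=> /ltnW/card_gt0P [x _] partCs; exists (block_graph R Cstar).
split; first exact: block_graph_weighted.
split; first exact: (volume_block_graph_gt0 R partCs x).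
move=> C partC neqC; apply: (modularity_lt_of_pair_gain partCs partC neqC).
  exact: (pair_gain_block_graph_gt0 R partCs).
exact: (pair_gain_block_graph_lt0 R partCs).
Qed.
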